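(* Let $n$ be even and let $G$ be a bipartite graph with parts $V_1=\{v^1_1,\dots,v^1_n\}$ and $V_2=\{v^2_1,\dots,v^2_n\}$, with maximum matching size $\alpha(G)$. Let $G'$ be the graph on vertex set $V_0\cup V_1\cup V_2\cup V_3\cup V_4$, where $V_0=\{v^0_1,\dots,v^0_{n/2}\}$, $V_3=\{v^3_1,\dots,v^3_n\}$, $V_4=\{v^4_1,\dots,v^4_{n/2}\}$ are new vertices, with edge set consisting of: $v^0_i v^1_{2i-1}$ and $v^0_i v^1_{2i}$ for all $i\in[n/2]$; all edges of $G$ between $V_1$ and $V_2$; $v^2_i v^3_i$ for all $i\in[n]$; and $v^3_i v^4_j$ for all $i\in[n]$, $j\in[n/2]$. Then (a) for every matching $M$ of $G$ there is a TSP tour of $G'$ of $(1,2)$-cost at most $5n-|M|$, and (b) every TSP tour of $G'$ has $(1,2)$-cost at least $5n-\alpha(G)$. Consequently the optimal $(1,2)$-TSP cost of $G'$ (which has $4n$ vertices) equals $5n-\alpha(G)$.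
   Context: For a graph $F=(V,E)$, the $(1,2)$-cost of a TSP tour (a cyclic ordering $(v_1,\dots,v_N)$ of $V$) is $\sum_{i=1}^N D(v_i,v_{i+1})$ with $v_{N+1}=v_1$, where $D(u,v)=1$ if $uv\in E$ and $D(u,v)=2$ otherwise; the optimal $(1,2)$-TSP cost is the minimum over tours. *)

From mathcomp Require Import all_boot.
Set Implicit Arguments. Unset Strict Implicit. Unset Printing Implicit Defensive.

Section TSP.
Variables (V : finType) (e : rel V).

Definition tsp_dist (u v : V) : nat := if e u v then 1 else 2.

(* a TSP tour: a cyclic ordering (v_1,...,v_N) of V, given as a sequence
   listing every vertex exactly once *)
Definition is_tour (s : seq V) : Prop := perm_eq s (enum V).

Definition tour_cost (s : seq V) : nat :=
  match s with
  | [::] => 0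
  | x :: t => sumn (pairmap tsp_dist x (rcons t x))
  end.

Definition is_opt_tsp_cost (c : nat) : Prop :=
  (exists2 s, is_tour s & tour_cost s = c) /\
  (forall s, is_tour s -> c <= tour_cost s).
End TSP.

(* E i j  <->  v^1_i v^2_j is an edge of G (0-indexed) *)
Definition is_bmatching n (E : 'I_n -> 'I_n -> bool) (M : {set 'I_n * 'I_n}) : bool :=
  [forall p in M, E p.1 p.2] &&
  [forall p in M, forall q in M, (p.1 == q.1) || (p.2 == q.2) ==> (p == q)].

Definition max_matching n (E : 'I_n -> 'I_n -> bool) : nat :=
  \max_(M : {set 'I_n * 'I_n} | is_bmatching E M) #|M|.

Definition Vp (n : nat) : finType :=
  ((('I_(n./2) + 'I_n) + 'I_n) + 'I_n + 'I_(n./2))%type.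

Definition vtx0 n (i : 'I_(n./2)) : Vp n := inl (inl (inl (inl i))).
Definition vtx1 n (i : 'I_n) : Vp n := inl (inl (inl (inr i))).
Definition vtx2 n (i : 'I_n) : Vp n := inl (inl (inr i)).
Definition vtx3 n (i : 'I_n) : Vp n := inl (inr i).
Definition vtx4 n (i : 'I_(n./2)) : Vp n := inr i.

(* oriented adjacency (lower part index -> higher part index); indices are
   0-based, so v^0_i ~ v^1_{2i-1}, v^1_{2i} becomes i ~ 2i, 2i+1 *)
Definition Gp_adj n (E : 'I_n -> 'I_n -> bool) (x y : Vp n) : bool :=
  match x, y with
  | inl (inl (inl (inl i))), inl (inl (inl (inr j))) =>
      (val j == (val i).*2) || (val j == (val i).*2.+1)
  | inl (inl (inl (inr i))), inl (inl (inr j)) => E i j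
  | inl (inl (inr i)), inl (inr j) => i == j
  | inl (inr _), inr _ => true
  | _, _ => false
  end.

Definition Gp_edge n (E : 'I_n -> 'I_n -> bool) : rel (Vp n) :=
  fun x y => Gp_adj E x y || Gp_adj E y x.

From mathcomp Require Import all_boot zify.
Set Implicit Arguments. Unset Strict Implicit. Unset Printing Implicit Defensive.

(* A tour on N vertices costs 2N minus the number of its steps that follow an
   edge, and G' has N = 4n vertices, so both bounds are statements about the
   number of edge steps of a tour.

   Lower bound (at most 3n + alpha(G) edge steps).  Every edge of G' joins two
   consecutive levels V0..V4.  An edge step between V0-V1, V2-V3 or V3-V4 is
   charged to its endpoint in V1, V2 or V4 respectively; a V1-V2 step is charged
   to its first vertex when the previous step is also a V1-V2 step.  A vertex
   of V1 or V2 receives at most one charge and a vertex of V4 at most two, for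
   a total of 3n.  The uncharged V1-V2 steps are the first steps of maximal
   runs of V1-V2 steps; they are pairwise vertex-disjoint, hence form a matching
   of G, so there are at most alpha(G) of them.

   A matching M extends to a bijection f of [n] with
   (u, f u) in M for every matched u.  The tour visiting, for i = 0..n/2-1,
       v1_2i v0_i v1_2i+1 v2_f(2i+1) v3_f(2i+1) v4_i v3_f(2i+2) v2_f(2i+2)
   (indices of V1 modulo n) uses 6 edges per block plus one edge per u with
   f u adjacent to u, i.e. at least 3n + |M| edge steps. *)

Section TourCost.
Variables (V : finType) (e : rel V).

Lemma tour_cost_ord (s : seq V) (d : V) :
  tour_cost e s = \sum_(k < size s) tsp_dist e (nth d s k) (nth d s (ordS k)).
Proof.
case: s => [|a t]; first by rewrite big_ord0.
rewrite /tour_cost sumnE (big_nth 0) size_pairmap size_rcons big_mkord.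
apply: eq_bigr => k _; rewrite (nth_pairmap a) ?size_rcons //.
have hk : k < size (a :: t) := ltn_ord k.
rewrite -rcons_cons nth_rcons hk (set_nth_default d a hk) nth_rcons /=.
case: (ltngtP k (size t)) => [lt|gt|eq]; last by rewrite eq modnn.
- by rewrite modn_small ?ltnS // (set_nth_default d).
- by move: hk; rewrite /= ltnS leqNgt gt.
Qed.

Lemma tour_cost_edges (s : seq V) (d : V) :
  tour_cost e s + \sum_(k < size s) e (nth d s k) (nth d s (ordS k)) = 2 * size s.
Proof.
rewrite (tour_cost_ord s d) -big_split /= -[in RHS](card_ord (size s)) mulnC.
by rewrite -sum_nat_const; apply: eq_bigr => k _; rewrite /tsp_dist; case: (e _ _).
Qed.

Lemma tour_sum (s : seq V) (d : V) (w : V -> nat) :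
  is_tour s -> \sum_(k < size s) w (nth d s k) = \sum_v w v.
Proof.
move=> hs; rewrite -[RHS]big_enum /= -(perm_big _ hs) (big_nth d) big_mkord.
exact: eq_bigr.
Qed.

End TourCost.

Lemma ord_pred_neq_ordS N (k : 'I_N) : 2 < N -> ord_pred k != ordS k.
Proof.
move=> hN; apply/eqP => /(congr1 (@ordS N)) /(congr1 val); rewrite ord_predK /=.
have hk := ltn_ord k.
case: (ltngtP k.+1 N) => [lt|gt|eq]; last 2 first.
- lia.
- by rewrite eq modnn modn_small //; lia.
rewrite (modn_small lt); case: (ltngtP k.+2 N) => [lt2|gt2|eq2].
- by rewrite modn_small //; lia.
- lia.
- by rewrite eq2 modnn; lia.
Qed.

Lemma sum_blocks (G : nat -> nat) (m b : nat) :
  \sum_(k < m * b) G k = \sum_(i < m) \sum_(0 <= r < b) G (i * b + r).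
Proof.
rewrite -(big_mkord xpredT G) big_nat_mul big_mkord; apply: eq_bigr => i _.
rewrite -{1}[i * b]add0n big_addn mulSn addnK; apply: eq_bigr => r _.
by rewrite addnC.
Qed.

Lemma bmatchingP n (E : 'I_n -> 'I_n -> bool) (M : {set 'I_n * 'I_n}) :
  reflect ((forall p, p \in M -> E p.1 p.2) /\
           {in M &, forall p q, (p.1 == q.1) || (p.2 == q.2) -> p = q})
          (is_bmatching E M).
Proof.
apply: (iffP andP) => [[/forall_inP hE /forall_inP hU]|[hE hU]]; split.
- exact: hE.
- move=> p q hp hq h; apply/eqP.
  by move/forall_inP: (hU p hp) => /(_ q hq) /implyP; apply.
- exact/forall_inP.
- apply/forall_inP => p hp; apply/forall_inP => q hq; apply/implyP => h.
  by apply/eqP; apply: hU.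
Qed.

(* alpha(G) is the size of an actual matching (the empty one makes the
   maximum range over a nonempty set). *)
Lemma max_matching_attained n (E : 'I_n -> 'I_n -> bool) :
  exists2 M, is_bmatching E M & #|M| = max_matching E.
Proof.
have nonempty : 0 < #|[pred M : {set 'I_n * 'I_n} | is_bmatching E M]|.
  apply/card_gt0P; exists set0; rewrite inE; apply/bmatchingP.
  by split=> [p|p q]; rewrite inE.
have [M0 hM0 maxE] := eq_bigmax_cond (fun M : {set 'I_n * 'I_n} => #|M|) nonempty.
by exists M0; rewrite // /max_matching maxE.
Qed.

Section Transfer.
Variable T : finType.

(* Listing two sets in enumeration order pairs the i-th element of A with the
   i-th element of B; for sets of equal size this is a bijection A -> B. *)
Definition transfer (A B : {set T}) (x : T) : T := nth x (enum B) (index x (enum A)).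

Lemma transfer_in (A B : {set T}) (x : T) :
  #|A| = #|B| -> x \in A -> transfer A B x \in B.
Proof.
move=> AB xA; rewrite -mem_enum /transfer mem_nth //.
by rewrite -cardE -AB cardE index_mem mem_enum.
Qed.

Lemma transfer_inj (A B : {set T}) : #|A| = #|B| -> {in A &, injective (transfer A B)}.
Proof.
move=> AB x y xA yA.
have idx_lt z : z \in A -> index z (enum A) < size (enum B).
  by move=> zA; rewrite -cardE -AB cardE index_mem mem_enum.
rewrite /transfer (set_nth_default y x (idx_lt x xA)) => /eqP.
rewrite nth_uniq ?enum_uniq ?idx_lt // => /eqP h.
by have := congr1 (nth x (enum A)) h; rewrite !nth_index ?mem_enum.
Qed.

(* A set of pairs that is injective in both coordinates (a bipartite matching
   on T x T) is the restriction of a bijection of T: send the unmatched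
   elements to the unmatched ones with [transfer]. *)
Lemma matching_extends (M : {set T * T}) :
  {in M &, forall p q, (p.1 == q.1) || (p.2 == q.2) -> p = q} ->
  exists2 f : T -> T, injective f & forall p, p \in M -> f p.1 = p.2.
Proof.
move=> hM; pose A := [set p.1 | p in M]; pose B := [set p.2 | p in M].
have cardA : #|A| = #|M|.
  by apply: card_in_imset => p q hp hq h; apply: hM; rewrite ?h ?eqxx.
have cardB : #|B| = #|M|.
  by apply: card_in_imset => p q hp hq h; apply: hM; rewrite ?h ?eqxx ?orbT.
have cardC : #|~: A| = #|~: B| by have := cardsC A; have := cardsC B; lia.
pose f x := if [pick p in M | p.1 == x] is Some p then p.2 else transfer (~: A) (~: B) x.
have unmatched x : (forall p, (p \in M) && (p.1 == x) = false) -> x \in ~: A.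
  by move=> hx; rewrite inE; apply/imsetP => -[p hp ex]; have := hx p; rewrite hp ex eqxx.
exists f.
- move=> x y; rewrite /f.
  case: pickP => [p /andP[hp /eqP <-]|/unmatched hx];
  case: pickP => [q /andP[hq /eqP <-]|/unmatched hy].
  + by move=> h; apply/congr1/hM => //; rewrite h eqxx orbT.
  + move: (transfer_in cardC hy); rewrite inE => /negP hy' h.
    by case: hy'; rewrite -h; apply/imsetP; exists p.
  + move: (transfer_in cardC hx); rewrite inE => /negP hx' h.
    by case: hx'; rewrite h; apply/imsetP; exists q.
  + exact: transfer_inj.
- move=> p hp; rewrite /f; case: pickP => [q /andP[hq /eqP e]|/(_ p)].
  + by rewrite (hM q p) // e eqxx.
  + by rewrite hp eqxx.
Qed.
End Transfer.

Lemma matching_permutation n (E : 'I_n -> 'I_n -> bool) (M : {set 'I_n * 'I_n}) :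
  is_bmatching E M -> exists2 f : 'I_n -> 'I_n, injective f & #|M| <= \sum_u E u (f u).
Proof.
case/bmatchingP=> hE hM; have [f f_inj hf] := matching_extends hM.
exists f => //.
have fst_inj : {in M &, injective fst}.
  by move=> p q hp hq h; apply: hM; rewrite ?h ?eqxx.
rewrite -(card_in_imset fst_inj) -sum1_card big_mkcond /=; apply: leq_sum => u _.
by case: ifP => // /imsetP[p hp ->]; rewrite hf // hE.
Qed.

Ltac case_vertex v := case: v => [[[[?|?]|?]|?]|?].

Section Layers.
Variables (n : nat) (E : 'I_n -> 'I_n -> bool).
Local Notation V := (Vp n).
Local Notation e := (Gp_edge E).

Definition level (v : V) : nat :=
  match v with
  | inl (inl (inl (inl _))) => 0
  | inl (inl (inl (inr _))) => 1
  | inl (inl (inr _)) => 2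
  | inl (inr _) => 3
  | inr _ => 4
  end.

(* a and b are joined by an edge of G (between V1 and V2). *)
Definition link12 (a b : V) : bool := e a b && (level a + level b == 3).

(* The edge ab is charged to a: a lies in V1, V2 or V4 and b is its neighbour
   in V0, V3 or V3 respectively. *)
Definition owns (a b : V) : bool :=
  [&& e a b, level a \in [:: 1; 2; 4] & level a + level b != 3].

Lemma edge_split (a b : V) : e a b = owns a b + owns b a + link12 a b :> nat.
Proof.
rewrite /owns /link12 /Gp_edge.
by case_vertex a; case_vertex b; rewrite //= ?andbT ?andbF ?orbF ?addn0.
Qed.

(* The number of charges a vertex can receive from the two tour steps at it. *)
Definition capacity (v : V) : nat :=
  (level v == 1) + (level v == 2) + 2 * (level v == 4).

(* The charges received by v when the tour passes p, v, q: the steps charged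
   to v, plus one if v lies inside a run of two consecutive G-steps. *)
Definition charge (p v q : V) : nat :=
  owns v p + owns v q + (link12 p v && link12 v q).

(* A vertex of V1 (resp. V2) has a single neighbour in V0 (resp. V3), so
   with distinct tour neighbours it receives at most its capacity. *)
Lemma charge_le (p v q : V) : p != q -> charge p v q <= capacity v.
Proof.
rewrite /charge /owns /link12 /capacity /Gp_edge.
case_vertex v; case_vertex p; case_vertex q;
  rewrite //= ?andbT ?andbF ?orbF ?addn0 ?add0n => /eqP hpq //; try exact: leq_b1.
-
  case: (boolP (_ || _)) => h1; case: (boolP (_ || _)) => h2 //=.
  by case: hpq; do 4 congr inl; apply: val_inj; move: h1 h2 => /=; lia.
-
  by case: eqP => [h1|]; case: eqP => [h2|] //; case: hpq; rewrite -h1 -h2.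
Qed.

Lemma sum_capacity : ~~ odd n -> \sum_(v : V) capacity v = 3 * n.
Proof.
move/even_halfK=> hn2; rewrite /capacity !big_sumType /= !sum_nat_const !card_ord.
lia.
Qed.

Lemma card_Vp : ~~ odd n -> #|V| = 4 * n.
Proof. by move/even_halfK=> hn2; rewrite !card_sum !card_ord; lia. Qed.

End Layers.

(* Lower bound: a tour s of G' has at most 3n + alpha(G) edge steps.  The
   vertex u0 only provides a default element, i.e. witnesses n > 0. *)
Section LowerBound.
Variables (n : nat) (E : 'I_n -> 'I_n -> bool) (u0 : 'I_n) (s : seq (Vp n)).
Hypothesis tour_s : is_tour s.
Local Notation V := (Vp n).
Local Notation e := (Gp_edge E).
Local Notation N := (size s).

Let x (k : 'I_N) : V := nth (vtx1 u0) s k.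

Lemma tour_vertex_inj : injective x.
Proof.
move=> i j /eqP; rewrite nth_uniq ?ltn_ord ?(perm_uniq tour_s) ?enum_uniq //.
by move/eqP/val_inj.
Qed.

Definition run_start (k : 'I_N) : bool :=
  link12 E (x k) (x (ordS k)) && ~~ link12 E (x (ord_pred k)) (x k).

Lemma run_start_not_next (k k' : 'I_N) : run_start k -> run_start k' -> k != ordS k'.
Proof.
move=> /andP[_ hk] /andP[hk' _]; apply/eqP => hkk'.
by move: hk; rewrite hkk' ordSK hk'.
Qed.

Lemma run_starts_disjoint (k k' : 'I_N) (a : V) : run_start k -> run_start k' ->
  a \in [:: x k; x (ordS k)] -> a \in [:: x k'; x (ordS k')] -> k = k'.
Proof.
move=> hk hk'; rewrite !inE => /orP[] /eqP-> /orP[] /eqP /tour_vertex_inj //.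
- by move=> h; move: (run_start_not_next hk hk'); rewrite h eqxx.
- by move=> h; move: (run_start_not_next hk' hk); rewrite -h eqxx.
- exact: ordS_inj.
Qed.

Definition pair12 (a b : V) : 'I_n * 'I_n :=
  match a, b with
  | inl (inl (inl (inr u))), inl (inl (inr w)) => (u, w)
  | inl (inl (inr w)), inl (inl (inl (inr u))) => (u, w)
  | _, _ => (u0, u0)
  end.

Lemma pair12P (a b : V) : link12 E a b ->
  [/\ E (pair12 a b).1 (pair12 a b).2, vtx1 (pair12 a b).1 \in [:: a; b]
    & vtx2 (pair12 a b).2 \in [:: a; b]].
Proof.
rewrite /link12 /Gp_edge.
case_vertex a; case_vertex b; rewrite //= ?orbF ?andbT ?inE ?eqxx ?orbT.
all: by [split | case/andP => _ /eqP].
Qed.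

(* The edges of G traversed at run starts form a matching of G. *)
Lemma run_starts_le_matching : #|[set k | run_start k]| <= max_matching E.
Proof.
set K := [set k | run_start k].
pose g k := pair12 (x k) (x (ordS k)).
have gP k : k \in K -> [/\ E (g k).1 (g k).2,
    vtx1 (g k).1 \in [:: x k; x (ordS k)] & vtx2 (g k).2 \in [:: x k; x (ordS k)]].
  by rewrite inE => /andP[/pair12P].
have g_share k k' : k \in K -> k' \in K ->
    ((g k).1 == (g k').1) || ((g k).2 == (g k').2) -> k = k'.
  move=> hk hk'; have [_ h1 h2] := gP k hk; have [_ h1' h2'] := gP k' hk'.
  rewrite !inE in hk hk'.
  case/orP=> /eqP h; rewrite h in h1 h2.
  - exact: run_starts_disjoint hk hk' h1 h1'.
  - exact: run_starts_disjoint hk hk' h2 h2'.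
have g_inj : {in K &, injective g}.
  by move=> k k' hk hk' h; apply: g_share => //; rewrite h eqxx.
rewrite -(card_in_imset g_inj); apply: leq_bigmax_cond; apply/bmatchingP; split.
- by move=> _ /imsetP[k hk ->]; have [] := gP k hk.
- by move=> _ _ /imsetP[k hk ->] /imsetP[k' hk' ->] h; rewrite (g_share k k').
Qed.

Lemma edges_charge_runs :
  \sum_(k < N) e (x k) (x (ordS k)) =
  \sum_(k < N) charge E (x (ord_pred k)) (x k) (x (ordS k)) + #|[set k | run_start k]|.
Proof.
rewrite (eq_bigr _ (fun k _ => edge_split E _ _)) !big_split /=.
have -> : \sum_(k < N) owns E (x (ordS k)) (x k) = \sum_(k < N) owns E (x k) (x (ord_pred k)).
  by rewrite (reindex_inj (@ord_pred_inj N)); apply: eq_bigr => k _; rewrite ord_predK.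
have -> : \sum_(k < N) link12 E (x k) (x (ordS k)) =
    \sum_(k < N) (link12 E (x (ord_pred k)) (x k) && link12 E (x k) (x (ordS k)))
    + #|[set k | run_start k]|.
  rewrite -sum1_card [X in _ + X]big_mkcond -big_split /=; apply: eq_bigr => k _.
  by rewrite inE /run_start; case: (link12 _ _ _); case: (link12 _ _ _).
by rewrite [in LHS]addnA [X in X + _ + _]addnC.
Qed.

(* Charges are bounded by capacities, which sum to 3n. *)
Lemma tour_edges_le : ~~ odd n ->
  \sum_(k < N) e (x k) (x (ordS k)) <= 3 * n + max_matching E.
Proof.
move=> even_n; rewrite edges_charge_runs leq_add ?run_starts_le_matching //.
have N_gt2 : 2 < N.
  by rewrite (perm_size tour_s) -cardE card_Vp //; have := ltn_ord u0; lia.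
rewrite -(sum_capacity even_n) -(tour_sum (vtx1 u0) (@capacity n) tour_s).
apply: leq_sum => k _; apply: charge_le.
by rewrite (inj_eq tour_vertex_inj) ord_pred_neq_ordS.
Qed.

End LowerBound.

(* Part (b): every tour costs at least 2 * 4n - (3n + alpha(G)). *)
Lemma tour_cost_lower n (E : 'I_n -> 'I_n -> bool) (s : seq (Vp n)) :
  ~~ odd n -> is_tour s -> 5 * n - max_matching E <= tour_cost (Gp_edge E) s.
Proof.
move=> even_n tour_s; case: (posnP n) => [n0|n_gt0].
  by have -> : 5 * n = 0 by rewrite n0.
have size_s : size s = 4 * n by rewrite (perm_size tour_s) -cardE card_Vp.
have := tour_cost_edges (Gp_edge E) s (vtx1 (Ordinal n_gt0)).
have := tour_edges_le E (Ordinal n_gt0) tour_s even_n.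
rewrite size_s; lia.
Qed.

Section TourFromPermutation.
Variables (n : nat) (E : 'I_n -> 'I_n -> bool) (f : 'I_n -> 'I_n).
Hypotheses (f_inj : injective f) (even_n : ~~ odd n) (m_gt0 : 0 < n./2).
Local Notation m := (n./2).
Local Notation V := (Vp n).
Local Notation e := (Gp_edge E).

(* v0_i is adjacent to the two V1 vertices [twin i false] = 2i and
   [twin i true] = 2i + 1; together these enumerate V1. *)
Lemma twin_subproof (i : 'I_m) (b : bool) : i.*2 + b < n.
Proof. by have := even_halfK even_n; have := ltn_ord i; case: b; lia. Qed.

Definition twin (i : 'I_m) (b : bool) : 'I_n := Ordinal (twin_subproof i b).

Lemma half_subproof (u : 'I_n) : u./2 < m.
Proof. by rewrite ltn_half_double even_halfK. Qed.

Lemma twin_bij : bijective (fun p : 'I_m * bool => twin p.1 p.2).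
Proof.
exists (fun u => (Ordinal (half_subproof u), odd u)).
- move=> [i b]; congr pair; first apply: val_inj.
  + by rewrite /= addnC half_bit_double.
  + by rewrite /= oddD odd_double; case: b.
- by move=> u; apply: val_inj; rewrite /= addnC odd_double_half.
Qed.

Lemma sum_twins (F : 'I_n -> nat) :
  \sum_u F u = \sum_(i < m) (F (twin i true) + F (twin i false)).
Proof.
rewrite (reindex _ (onW_bij _ twin_bij)) /=.
rewrite -(pair_big xpredT xpredT (fun i b => F (twin i b))).
by apply: eq_bigr => i _; rewrite big_bool.
Qed.

Definition block (i : 'I_m) (r : nat) : V :=
  match r with
  | 0 => vtx1 (twin i false)
  | 1 => vtx0 i
  | 2 => vtx1 (twin i true)
  | 3 => vtx2 (f (twin i true))
  | 4 => vtx3 (f (twin i true))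
  | 5 => vtx4 i
  | 6 => vtx3 (f (twin (ordS i) false))
  | _ => vtx2 (f (twin (ordS i) false))
  end.

(* The k-th vertex of the tour, extended periodically to all of nat. *)
Definition tour_pos (k : nat) : V := block (Ordinal (ltn_pmod (k %/ 8) m_gt0)) (k %% 8).

(* Position j*8 + r holds vertex r of block j mod n/2; in particular the
   position after a block starts the next one and the tour closes up after
   n/2 blocks. *)
Lemma tour_posE (j r : nat) :
  r < 8 -> tour_pos (j * 8 + r) = block (Ordinal (ltn_pmod j m_gt0)) r.
Proof.
move=> r_lt8; have hq : (j * 8 + r) %/ 8 = j by lia.
have hr : (j * 8 + r) %% 8 = r by lia.
by rewrite /tour_pos hq hr.
Qed.

Lemma tour_pos_block (i : 'I_m) (r : nat) : r < 8 -> tour_pos (i * 8 + r) = block i r.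
Proof.
by move=> r_lt8; rewrite tour_posE //; congr block; apply: val_inj; rewrite /= modn_small.
Qed.

Lemma tour_pos_next_block (i : 'I_m) : tour_pos (i * 8 + 7).+1 = block (ordS i) 0.
Proof.
have -> : (i * 8 + 7).+1 = i.+1 * 8 + 0 by lia.
by rewrite tour_posE //; congr block; apply: val_inj.
Qed.

Lemma tour_pos_wrap : tour_pos (m * 8) = tour_pos 0.
Proof.
rewrite -[m * 8]addn0 -{2}[0]addn0 -{2}[0](mul0n 8) !tour_posE //.
by congr block; apply: val_inj; rewrite /= modnn mod0n.
Qed.

Lemma tour_pos_surj (v : V) : exists2 k, k < m * 8 & tour_pos k = v.
Proof.
have hit (i : 'I_m) r : r < 8 -> exists2 k, k < m * 8 & tour_pos k = block i r.
  move=> r_lt8; exists (i * 8 + r); last exact: tour_pos_block.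
  by have := ltn_ord i; lia.
have [g _ gK] := twin_bij; have [finv _ finvK] := injF_bij f_inj.
case: v => [[[[i|u]|w]|w]|i].
- exact: hit i 1 _.
- rewrite -[u]gK; case: (g u) => i [].
  + exact: hit i 2 _.
  + exact: hit i 0 _.
- rewrite -[w]finvK -[finv w]gK; case: (g _) => i [].
  + exact: hit i 3 _.
  + by have [k hk hk'] := hit (ord_pred i) 7 isT; exists k; rewrite // hk' /= ord_predK.
- rewrite -[w]finvK -[finv w]gK; case: (g _) => i [].
  + exact: hit i 4 _.
  + by have [k hk hk'] := hit (ord_pred i) 6 isT; exists k; rewrite // hk' /= ord_predK.
- exact: hit i 5 _.
Qed.

Definition perm_tour : seq V := mkseq tour_pos (m * 8).

(* It has 4n entries and covers G', so it lists every vertex once. *)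
Lemma perm_tour_is_tour : is_tour perm_tour.
Proof.
have all_in v : v \in perm_tour.
  by have [k hk <-] := tour_pos_surj v; apply: map_f; rewrite mem_iota.
have size_tour : size perm_tour = #|V|.
  by rewrite size_mkseq card_Vp // -{1}(even_halfK even_n); lia.
have uniq_tour : uniq perm_tour.
  by apply: (leq_size_uniq (enum_uniq V)) => [v _|]; rewrite ?all_in // size_tour cardE.
by apply: uniq_perm; rewrite ?enum_uniq // => v; rewrite all_in mem_enum.
Qed.

Lemma block_edges (i : 'I_m) :
  \sum_(0 <= r < 8) e (tour_pos (i * 8 + r)) (tour_pos (i * 8 + r).+1) =
  6 + E (twin i true) (f (twin i true)) + E (twin (ordS i) false) (f (twin (ordS i) false)).
Proof.
have next r : r < 7 -> tour_pos (i * 8 + r).+1 = block i r.+1.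
  by move=> r_lt7; rewrite -addnS tour_pos_block.
rewrite !big_nat_recl // big_geq // tour_pos_next_block !tour_pos_block // !next //.
rewrite /Gp_edge /= !eqxx addn0 addn1 eqxx ?orbT ?orbF.
lia.
Qed.

(* Summing over the blocks, every u in [n] is counted once. *)
Lemma perm_tour_edges :
  \sum_(k < size perm_tour) e (nth (tour_pos 0) perm_tour k)
                              (nth (tour_pos 0) perm_tour (ordS k))
  = 6 * m + \sum_u E u (f u).
Proof.
have -> : \sum_(k < size perm_tour) e (nth (tour_pos 0) perm_tour k)
                                      (nth (tour_pos 0) perm_tour (ordS k))
    = \sum_(0 <= k < m * 8) e (tour_pos k) (tour_pos k.+1).
  rewrite /perm_tour size_mkseq big_mkord; apply: eq_bigr => k _.
  rewrite /= !nth_mkseq ?ltn_pmod ?ltn_ord //; last by lia.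
  case: (ltngtP k.+1 (m * 8)) => [lt|gt|eq]; first by rewrite modn_small.
  - by have := ltn_ord k; lia.
  - by rewrite eq modnn tour_pos_wrap.
rewrite big_mkord (sum_blocks (fun k => e (tour_pos k) (tour_pos k.+1))) /=.
rewrite (eq_bigr _ (fun i _ => block_edges i)).
rewrite !big_split /= sum_nat_const card_ord mulnC -addnA; congr (_ + _).
rewrite (sum_twins (fun u => E u (f u))) big_split /=; congr (_ + _).
by rewrite [RHS](reindex_inj (@ordS_inj m)).
Qed.

(* Its cost is 2 * 4n - (3n + #{u | f u adjacent to u}). *)
Lemma perm_tour_cost : tour_cost e perm_tour + \sum_u E u (f u) = 5 * n.
Proof.
have := tour_cost_edges e perm_tour (tour_pos 0).
rewrite perm_tour_edges /perm_tour size_mkseq.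
have := even_halfK even_n; lia.
Qed.

End TourFromPermutation.

Lemma tour_cost_upper n (E : 'I_n -> 'I_n -> bool) (M : {set 'I_n * 'I_n}) :
  ~~ odd n -> is_bmatching E M ->
  exists2 s : seq (Vp n), is_tour s & tour_cost (Gp_edge E) s <= 5 * n - #|M|.
Proof.
move=> even_n matching_M; case: (posnP n) => [n0|n_gt0].
  exists (enum (Vp n)); first exact: perm_refl.
  by rewrite (size0nil (s := enum (Vp n))) // -cardE card_Vp // n0.
have m_gt0 : 0 < n./2 by have := even_halfK even_n; lia.
have [f f_inj le_M] := matching_permutation matching_M.
exists (perm_tour f even_n m_gt0); first exact: perm_tour_is_tour.
by have := perm_tour_cost E f even_n m_gt0; lia.
Qed.

Theorem mainTheorem19 (n : nat) (E : 'I_n -> 'I_n -> bool) :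
  ~~ odd n ->
  (forall M : {set 'I_n * 'I_n}, is_bmatching E M ->
     exists2 s : seq (Vp n), is_tour s &
       tour_cost (Gp_edge E) s <= 5 * n - #|M|)
  /\ (forall s : seq (Vp n), is_tour s ->
       5 * n - max_matching E <= tour_cost (Gp_edge E) s)
  /\ is_opt_tsp_cost (Gp_edge E) (5 * n - max_matching E).
Proof.
move=> even_n.
have lower s : is_tour s -> 5 * n - max_matching E <= tour_cost (Gp_edge E) s.
  exact: tour_cost_lower.
split; first by move=> M; exact: tour_cost_upper.
split; first exact: lower.
split; last exact: lower.
have [M0 matching_M0 maxE] := max_matching_attained E.
have [s tour_s cost_s] := tour_cost_upper even_n matching_M0.
by exists s => //; apply/eqP; rewrite eqn_leq lower // andbT -maxE.
Qed.
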